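(* Let $t,k\ge2$ be integers with $(t+1)\mid(k+1)$. Then $N(tk+i,k)=N(tk-i,k)=t-i$ for every integer $0\le i\le t$.
   Context: For $n>k\ge1$, $N(n,k)$ is the nullity of the $n\times n$ skew-symmetric Toeplitz matrix $A(n,k)$ whose first $k$ superdiagonals have all entries $1$ and whose remaining superdiagonals have all entries $0$. This nullity depends only on $n\bmod (k^2+k)$, and $N(n,k)$ is defined for every integer $n$ as $N(n',k)$ for any $n'>k$ with $n'\equiv n\pmod{k^2+k}$. *)

From mathcomp Require Import all_boot all_order all_algebra.
Set Implicit Arguments. Unset Strict Implicit. Unset Printing Implicit Defensive.
Import Order.TTheory GRing.Theory Num.Theory.
Local Open Scope ring_scope.

Definition Amx (k n : nat) : 'M[rat]_n :=
  \matrix_(i < n, j < n)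
    (if ((i < j)%N && (j <= i + k)%N) then 1
     else if ((j < i)%N && (i <= j + k)%N) then -1 else 0).

Definition nullityA (n k : nat) : nat := (n - \rank (Amx k n))%N.

(* N(n,k) for every integer n: for n > k it is the nullity of A(n,k); otherwise
   it is the nullity of A(n',k) for the representative
   n' = k+1 + ((n - (k+1)) mod (k^2+k)) > k with n' = n mod (k^2+k). *)
Definition N (n : int) (k : nat) : nat :=
  if (k%:Z < n) then nullityA `|n|%N k
  else nullityA (k.+1 + `|((n - k.+1%:Z) %% (k * k + k)%N%:Z)%Z|%N)%N k.

From mathcomp Require Import all_boot all_order all_algebra.
Import Order.TTheory GRing.Theory Num.Theory.
From mathcomp Require Import zify ring.

Set Implicit Arguments. Unset Strict Implicit. Unset Printing Implicit Defensive.
Local Open Scope ring_scope.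

(* A row vector u of length n is identified with the polynomial u(X) of degree < n.  The
   entries of u A(n,k) are the coefficients of X^k, ..., X^(n+k-1) in u(X) Q(X), where
   Q = (X^(k+1) - 1)(1 + X + ... + X^(k-1)); so the left kernel of A(n,k) consists of the
   multiples of Q of the form a + X^(n+k) b with deg a, deg b < k.  When (t+1) | (k+1), the
   factors 1 + ... + X^(k-1) and X^(t+1) - 1 are coprime; reducing a + X^(n+k) b modulo
   X^(k+1) - 1 and modulo 1 + ... + X^(k-1) forces a = b = 0 for n = tk + t and n = tk - t,
   whereas for n = tk the t shifts X^j W (j < t) of
   W = (X^(k(t+1)) - 1) / ((1 + ... + X^(k-1))(X^(t+1) - 1)) lie in the kernel.  Since A(n,k)
   is A(n+1,k) without its first row and column, the nullity moves by at most 1 when n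
   moves by 1, which leaves N(tk + i, k) = N(tk - i, k) = t - i as the only possibility. *)

Section XnSub1Divisibility.
Variable R : idomainType.
Implicit Types d a b p : {poly R}.

Definition geomp k : {poly R} := \sum_(i < k) 'X^i.

Lemma coef_geomp k m : (geomp k)`_m = (m < k)%:R.
Proof.
have -> : geomp k = \poly_(i < k) 1.
  by rewrite poly_def; apply: eq_bigr => i _; rewrite scale1r.
by rewrite coef_poly; case: ltnP.
Qed.

Lemma geompS k : geomp k.+1 = 'X * geomp k + 1.
Proof.
rewrite /geomp big_ord_recl expr0 addrC mulr_sumr.
by congr (_ + _); apply: eq_bigr => i _; rewrite exprS.
Qed.

Lemma mulXsub1_geomp k : ('X - 1) * geomp k = 'X^k - 1.
Proof.
elim: k => [|k IHk]; first by rewrite /geomp big_ord0 mulr0 expr0 subrr.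
by rewrite geompS mulrDr mulrA [_ * 'X]mulrC -mulrA IHk exprS; ring.
Qed.

Lemma Xn_sub1_neq0 n : (0 < n)%N -> 'X^n - 1 != 0 :> {poly R}.
Proof. by move=> n_gt0; rewrite -size_poly_eq0 size_Xn_sub_1. Qed.

Lemma size_geomp k : size (geomp k) = k.
Proof.
case: k => [|k]; first by rewrite /geomp big_ord0 size_poly0.
have geomp_neq0 : geomp k.+1 != 0.
  apply: contra_eqN (mulXsub1_geomp k.+1) => /eqP->.
  by rewrite mulr0 eq_sym Xn_sub1_neq0.
have := size_mul (Xn_sub1_neq0 (ltn0Sn 0)) geomp_neq0.
by rewrite mulXsub1_geomp size_Xn_sub_1 // -polyC1 size_XsubC; case.
Qed.

Lemma size_Xn_sub1_cofactor p q n : (0 < n)%N -> 'X^n - 1 = p * q ->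
  size p = (n.+2 - size q)%N.
Proof.
move=> n_gt0 def_pq.
have := Xn_sub1_neq0 n_gt0; rewrite def_pq mulf_eq0 negb_or => /andP[p_neq0 q_neq0].
rewrite -(size_Xn_sub_1 R n_gt0) def_pq size_mul // prednK ?addnK //.
by rewrite addn_gt0 size_poly_gt0 p_neq0.
Qed.

Lemma dvdp_Xn_sub1 m q : ('X^m - 1 : {poly R}) %| 'X^(m * q) - 1.
Proof. by rewrite exprM -(expr1n _ q) subrXX expr1n dvdp_mulIl. Qed.

Lemma dvdp_geomp_Xn_sub1 k : geomp k %| 'X^k - 1.
Proof. by rewrite -mulXsub1_geomp dvdp_mulIr. Qed.

Lemma dvdp_geomp m n : (m %| n)%N -> geomp m %| geomp n.
Proof.
case/dvdnP=> q ->; rewrite -(dvdp_mul2l _ _ (Xn_sub1_neq0 (ltn0Sn 0))).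
by rewrite !mulXsub1_geomp mulnC dvdp_Xn_sub1.
Qed.

Lemma dvdp_add_Xn_eqmod d a b m e s : d %| 'X^m - 1 -> e = s %[mod m] ->
  (d %| a + 'X^e * b) = (d %| a + 'X^s * b).
Proof.
move=> dvd_d e_s.
have reduce x : (d %| a + 'X^x * b) = (d %| a + 'X^(x %% m) * b).
  have -> : a + 'X^x * b = a + 'X^(x %% m) * b + ('X^(m * (x %/ m)) - 1) * 'X^(x %% m) * b.
    by rewrite {1}(divn_eq x m) mulnC exprD; ring.
  by rewrite dvdp_addl // -mulrA dvdp_mulr // (dvdp_trans dvd_d) ?dvdp_Xn_sub1.
by rewrite reduce e_s -reduce.
Qed.

Lemma dvdp_size_eq0 d p : d %| p -> (size p < size d)%N -> p = 0.
Proof.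
move=> dvd_dp; apply: contraTeq => p_neq0.
by rewrite -leqNgt dvdp_leq.
Qed.

Lemma coprimep_Xn_sub1_Xn m s : (0 < m)%N -> coprimep ('X^m - 1) ('X^s : {poly R}).
Proof.
move=> m_gt0; apply: coprimep_expr.
rewrite -[X in coprimep _ X]subr0 -polyC0 coprimep_XsubC /root !hornerE expr0n.
by rewrite eqn0Ngt m_gt0 sub0r oppr_eq0 oner_eq0.
Qed.

Lemma dvdp_mulXn_add_eqmod d a b m e s : d %| 'X^m - 1 -> e + s = 0 %[mod m] ->
  d %| a + 'X^e * b -> d %| 'X^s * a + b.
Proof.
move=> dvd_d es_0 /(dvdp_mull ('X^s)).
by rewrite mulrDr mulrA -exprD addnC (dvdp_add_Xn_eqmod _ _ dvd_d es_0) mul1r.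
Qed.

End XnSub1Divisibility.

Arguments geomp {R} k.

Section CharZero.
Variable R : numDomainType.

Lemma coprimep_geomp_Xsub1 k : (0 < k)%N -> coprimep (geomp k : {poly R}) ('X - 1).
Proof.
move=> k_gt0; rewrite -polyC1 coprimep_XsubC /root /geomp horner_sum.
under eq_bigr do rewrite hornerXn expr1n.
by rewrite sumr_const card_ord pnatr_eq0 -lt0n k_gt0.
Qed.

Lemma coprimep_geomp_Xn_sub1 t k : (t.+1 %| k.+1)%N -> (0 < k)%N ->
  coprimep (geomp k : {poly R}) ('X^(t.+1) - 1).
Proof.
move=> dvd_tk k_gt0; rewrite -mulXsub1_geomp coprimepMr coprimep_geomp_Xsub1 //=.
apply/coprimepP => d dvd_dk dvd_dt.
have : d %| geomp k.+1 := dvdp_trans dvd_dt (dvdp_geomp _ dvd_tk).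
by rewrite geompS dvdp_addr ?dvdp_mull // => /dvdp_eqp1; apply; apply: eqpxx.
Qed.

End CharZero.

Lemma rVpolyE (R : nzRingType) n (u : 'rV[R]_n) :
  rVpoly u = \sum_(j < n) u 0 j *: 'X^j.
Proof.
rewrite {1}[u]row_sum_delta linear_sum.
by apply: eq_bigr => j _; rewrite linearZ; congr (_ *: _); apply: rVpoly_delta.
Qed.

Lemma mulmx_poly_rV_shifts (R : nzRingType) m n (W : {poly R}) (v : 'rV[R]_m) :
  v *m (\matrix_(j < m) poly_rV ('X^j * W) : 'M_(m, n)) = poly_rV (rVpoly v * W).
Proof.
rewrite mulmx_sum_row rVpolyE mulr_suml linear_sum.
by apply: eq_bigr => j _; rewrite rowK -scalerAl linearZ.
Qed.

Lemma rVpoly_eq0 (R : nzRingType) n (u : 'rV[R]_n) : (rVpoly u == 0) = (u == 0).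
Proof.
apply/eqP/eqP => [u0|->]; last exact: linear0.
by rewrite -[u]rVpolyK u0 linear0.
Qed.

(* X^k times the Laurent symbol of the Toeplitz matrix A(n,k): the coefficient of X^(k+d)
   is the entry on the d-th superdiagonal (d < 0 for subdiagonals). *)
Definition Asymbol k : {poly rat} := ('X^(k.+1) - 1) * geomp k.

Lemma Asymbol_neq0 k : (0 < k)%N -> Asymbol k != 0.
Proof.
by move=> k_gt0; rewrite mulf_neq0 ?Xn_sub1_neq0 // -size_poly_eq0 size_geomp -lt0n.
Qed.

Lemma coef_Asymbol k m : (Asymbol k)`_m =
  if (k < m <= k + k)%N then 1 else if (m < k)%N then -1 else 0.
Proof.
rewrite /Asymbol mulrBl mul1r coefB coefXnM !coef_geomp.
case: (ltnP m k.+1) => h1; case: (ltnP m k) => h2; case: (ltnP (m - k.+1) k) => h3;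
  case: (ltnP k m) => h4; case: (leqP m (k + k)) => h5 /=; try lia;
  by rewrite ?subr0 ?sub0r ?subrr.
Qed.

Lemma coef_mulmx_Amx k n (u : 'rV_n) (r : 'I_n) :
  (u *m Amx k n) 0 r = (rVpoly u * Asymbol k)`_(r + k).
Proof.
rewrite mxE rVpolyE mulr_suml coef_sum; apply: eq_bigr => l _.
rewrite -scalerAl coefZ coefXnM coef_Asymbol mxE; congr (_ * _).
case: (ltnP (r + k) l) => h1; case: (ltnP l r) => h2; case: (leqP r (l + k)) => h3;
  case: (ltnP r l) => h4; case: (leqP l (r + k)) => h5;
  case: (ltnP k (r + k - l)) => h6; case: (leqP (r + k - l) (k + k)) => h7;
  case: (ltnP (r + k - l) k) => h8 /=; try lia; done.
Qed.

Lemma size_Asymbol k : (size (Asymbol k) <= (k + k).+1)%N.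
Proof.
apply: leq_trans (size_mul_leq _ _) _.
by rewrite size_Xn_sub_1 // size_geomp addSn.
Qed.

Lemma Amx_ker_decomp k n (u : 'rV_n) : u *m Amx k n = 0 ->
  exists a b : {poly rat}, [/\ (size a <= k)%N, (size b <= k)%N &
    rVpoly u * Asymbol k = a + 'X^(n + k) * b].
Proof.
move=> uA0; set P := rVpoly u * Asymbol k.
have size_P : (size P <= n + k + k)%N.
  apply: leq_trans (size_mul_leq _ _) _.
  have size_u : (size (rVpoly u) <= n)%N := size_poly _ _.
  by move: (leq_add size_u (size_Asymbol k)); rewrite addnS addnA; case: (_ + _)%N.
exists (\poly_(i < k) P`_i), (\poly_(i < k) P`_(n + k + i)).
split; [exact: size_poly | exact: size_poly |].
apply/polyP => m; rewrite coefD coefXnM !coef_poly.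
have [lt_mk | le_km] := ltnP m k.
  by rewrite ifT ?addr0 //; lia.
have [lt_m_nk | le_nk_m] := ltnP m (n + k).
  have lt_mk_n : (m - k < n)%N by lia.
  have := congr1 (fun M : 'rV_n => M 0 (Ordinal lt_mk_n)) uA0.
  by rewrite coef_mulmx_Amx /= subnK // mxE add0r.
rewrite add0r; case: ltnP => [|le_k]; first by rewrite subnKC.
by rewrite nth_default //; apply: leq_trans size_P _; lia.
Qed.

Lemma poly_rV_mulmx_Amx_eq0 k n (x a b : {poly rat}) :
  (size x <= n)%N -> (size a <= k)%N ->
  x * Asymbol k = a + 'X^(n + k) * b -> poly_rV x *m Amx k n = 0.
Proof.
move=> size_x size_a xQ; apply/rowP => r.
rewrite coef_mulmx_Amx poly_rV_K // xQ coefD coefXnM mxE ltn_add2r ltn_ord addr0.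
by rewrite nth_default // (leq_trans size_a) ?leq_addl.
Qed.

Lemma nullityA_eq0 k n : (0 < k)%N ->
  (forall a b : {poly rat}, (size a <= k)%N -> (size b <= k)%N ->
     Asymbol k %| a + 'X^(n + k) * b -> a = 0 /\ b = 0) ->
  nullityA n k = 0%N.
Proof.
move=> k_gt0 only_trivial.
rewrite /nullityA; suff /eqP-> : row_free (Amx k n) by rewrite subnn.
apply: inj_row_free => u /Amx_ker_decomp [a [b [size_a size_b uQ]]].
have [a0 b0] := only_trivial a b size_a size_b ltac:(by rewrite -uQ dvdp_mull).
move/eqP: uQ; rewrite a0 b0 mulr0 addr0 mulf_eq0 (negPf (Asymbol_neq0 k_gt0)) orbF.
by rewrite rVpoly_eq0 => /eqP.
Qed.

Lemma Asymbol_cofactors t k : (t.+1 %| k.+1)%N -> (0 < k)%N ->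
  exists W phi : {poly rat}, [/\ size W = (t * k - t).+1, size phi = (k - t).+1 &
    W * Asymbol k = phi * ('X^(t * k + k) - 1)].
Proof.
move=> dvd_tk k_gt0; have le_tk : (t <= k)%N by rewrite -ltnS dvdn_leq.
have [phi def_phi] : exists phi : {poly rat}, 'X^(k.+1) - 1 = phi * ('X^(t.+1) - 1).
  by apply/dvdpP; case/dvdnP: dvd_tk => q ->; rewrite mulnC dvdp_Xn_sub1.
have [W def_W] : exists W : {poly rat},
    'X^(k * t.+1) - 1 = W * (geomp k * ('X^(t.+1) - 1)).
  apply/dvdpP; rewrite Gauss_dvdp ?coprimep_geomp_Xn_sub1 //.
  rewrite (dvdp_trans (dvdp_geomp_Xn_sub1 _ k) (dvdp_Xn_sub1 _ k t.+1)) /=.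
  by rewrite mulnC dvdp_Xn_sub1.
exists W, phi; split.
- rewrite (size_Xn_sub1_cofactor _ def_W) ?muln_gt0 ?k_gt0 //.
  rewrite size_mul ?size_geomp ?size_Xn_sub_1 ?Xn_sub1_neq0 -?size_poly_eq0 ?size_geomp //;
    try lia.
  by rewrite mulnS; nia.
- by rewrite (size_Xn_sub1_cofactor _ def_phi) // size_Xn_sub_1 //; lia.
- have -> : (t * k + k = k * t.+1)%N by rewrite mulnS mulnC addnC.
  by rewrite def_W /Asymbol def_phi; ring.
Qed.

Lemma nullityA_tk_ge t k : (t.+1 %| k.+1)%N -> (0 < k)%N ->
  (t <= nullityA (t * k) k)%N.
Proof.
move=> dvd_tk k_gt0; have le_tk : (t <= k)%N by rewrite -ltnS dvdn_leq.
have [W [phi [size_W size_phi WQ]]] := Asymbol_cofactors dvd_tk k_gt0.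
have W_neq0 : W != 0 by rewrite -size_poly_eq0 size_W.
set K : 'M[rat]_(t, t * k) := \matrix_(j < t) poly_rV ('X^j * W).
have K_ker : K *m Amx k (t * k) = 0.
  apply/row_matrixP => j; rewrite row_mul rowK row0.
  apply: (@poly_rV_mulmx_Amx_eq0 _ _ _ (- ('X^j * phi)) ('X^j * phi)).
  - apply: leq_trans (size_mul_leq _ _) _; rewrite size_polyXn size_W.
    by have := ltn_ord j; nia.
  - rewrite size_opp; apply: leq_trans (size_mul_leq _ _) _; rewrite size_polyXn size_phi.
    by have := ltn_ord j; lia.
  - by rewrite -mulrA WQ; ring.
have K_free : row_free K.
  apply: inj_row_free => v; rewrite mulmx_poly_rV_shifts.
  move/(congr1 rVpoly); rewrite poly_rV_K ?linear0; last first.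
    apply: leq_trans (size_mul_leq _ _) _; rewrite size_W addnS /=.
    by apply: leq_trans (leq_add (size_poly _ _) (leqnn _)) _; nia.
  by move/eqP; rewrite mulf_eq0 (negPf W_neq0) orbF rVpoly_eq0 => /eqP.
have /mxrankS : (K <= kermx (Amx k (t * k)))%MS by apply/sub_kermxP.
by rewrite mxrank_ker (eqP K_free).
Qed.

Lemma mxrank_col_mx_leq (F : fieldType) m1 m2 n (A : 'M[F]_(m1, n)) (B : 'M[F]_(m2, n)) :
  (\rank (col_mx A B) <= \rank A + \rank B)%N.
Proof. by rewrite -addsmxE; apply: mxrank_adds_leqif. Qed.

Lemma mxrank_row_mx_leq (F : fieldType) m n1 n2 (A : 'M[F]_(m, n1)) (B : 'M[F]_(m, n2)) :
  (\rank (row_mx A B) <= \rank A + \rank B)%N.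
Proof. by rewrite -mxrank_tr tr_row_mx -(mxrank_tr A) -(mxrank_tr B) mxrank_col_mx_leq. Qed.

Lemma mxrank_drsubmx (F : fieldType) m n (M : 'M[F]_(1 + m, 1 + n)) :
  (\rank (drsubmx M) <= \rank M <= (\rank (drsubmx M)).+2)%N.
Proof.
apply/andP; split.
  have -> : drsubmx M = row_mx 0 1%:M *m M *m col_mx 0 1%:M.
    rewrite -[in RHS](vsubmxK M) mul_row_col mul0mx mul1mx add0r.
    by rewrite -[in RHS](hsubmxK (dsubmx M)) mul_row_col mulmx0 mulmx1 add0r.
  exact: leq_trans (mxrankM_maxl _ _) (mxrankM_maxr _ _).
rewrite -{1}[M]vsubmxK -[dsubmx M]hsubmxK.
apply: leq_trans (mxrank_col_mx_leq _ _) _.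
apply: leq_trans (leq_add (rank_leq_row _) (mxrank_row_mx_leq _ _)) _.
by rewrite addnA -[X in (_ <= X)%N]addn2 addnC leq_add2l add1n ltnS rank_leq_col.
Qed.

Lemma drsubmx_Amx k n : drsubmx (Amx k (1 + n)) = Amx k n.
Proof.
apply/matrixP => i j; rewrite !mxE.
change (rshift 1 i : nat) with (1 + i)%N; change (rshift 1 j : nat) with (1 + j)%N.
by rewrite !add1n !ltnS.
Qed.

Lemma nullityA_lipschitz k m n : (m <= n)%N ->
  (nullityA m k <= nullityA n k + (n - m))%N /\
  (nullityA n k <= nullityA m k + (n - m))%N.
Proof.
move=> /subnKC <-; rewrite addKn; elim: (n - m)%N => [|d [IH1 IH2]].
  by rewrite !addn0.
have -> : (m + d.+1 = 1 + (m + d))%N by rewrite addnS add1n.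
move: IH1 IH2.
have /andP[] := mxrank_drsubmx (Amx k (1 + (m + d))); rewrite drsubmx_Amx /nullityA.
have := rank_leq_row (Amx k (m + d)); have := rank_leq_row (Amx k (1 + (m + d))).
lia.
Qed.

Lemma nullityA_eq0_modD t k n : (t.+1 %| k.+1)%N -> (0 < k)%N ->
  n = 0 %[mod k.+1] -> n = t %[mod k] -> nullityA n k = 0%N.
Proof.
move=> dvd_tk k_gt0 n_mod_k1 n_mod_k.
apply: nullityA_eq0 => // a b size_a size_b dvd_ab.
have c0 : 'X * a + b = 0.
  apply: (@dvdp_size_eq0 _ ('X^(k.+1) - 1)).
    apply: (dvdp_mulXn_add_eqmod (s := 1) (dvdpp _)) _ (dvdp_trans (dvdp_mulIl _ _) dvd_ab).
    by rewrite -addnA addn1 modnDr.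
  rewrite size_Xn_sub_1 // ltnS; apply: leq_trans (size_add _ _) _.
  rewrite geq_max (leqW size_b) andbT; apply: leq_trans (size_mul_leq _ _) _.
  by rewrite size_polyX add2n /= ltnS.
have b_eq : b = - ('X * a) by apply/eqP; rewrite -addr_eq0 addrC c0.
have : geomp k %| a + 'X^t * b.
  rewrite -(dvdp_add_Xn_eqmod _ _ (dvdp_geomp_Xn_sub1 _ k) (_ : n + k = t %[mod k])).
    exact: dvdp_trans (dvdp_mulIr _ _) dvd_ab.
  by rewrite modnDr.
have -> : a + 'X^t * b = - (('X^(t.+1) - 1) * a) by rewrite b_eq exprSr; ring.
rewrite dvdpNr Gauss_dvdpr ?coprimep_geomp_Xn_sub1 // => dvd_a.
suff a0 : a = 0 by rewrite b_eq a0 mulr0 oppr0.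
apply: dvdp_size_eq0 dvd_a _; rewrite size_geomp.
have [->|a_neq0] := eqVneq a 0; first by rewrite size_poly0.
by move: size_b; rewrite b_eq size_opp mulrC size_mulX.
Qed.

Lemma nullityA_eq0_modB t k n : (t.+1 %| k.+1)%N -> (0 < k)%N ->
  n + t = 0 %[mod k] -> n + t + t = 0 %[mod k.+1] -> nullityA n k = 0%N.
Proof.
move=> dvd_tk k_gt0 n_mod_k n_mod_k1.
have dvd_Xt_Xk : ('X^(t.+1) - 1 : {poly rat}) %| 'X^(k.+1) - 1.
  by case/dvdnP: dvd_tk => q ->; rewrite mulnC dvdp_Xn_sub1.
apply: nullityA_eq0 => // a b size_a size_b dvd_ab.
have dvd_k1 : 'X^(k.+1) - 1 %| 'X^(t.+1) * ('X^t * a) + b.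
  rewrite mulrA -exprD.
  apply: (dvdp_mulXn_add_eqmod (dvdpp _) _ (dvdp_trans (dvdp_mulIl _ _) dvd_ab)).
  by rewrite (_ : n + k + _ = n + t + t + k.+1)%N ?modnDr //; lia.
have c0 : 'X^t * a + b = 0.
  apply: (@dvdp_size_eq0 _ (geomp k * ('X^(t.+1) - 1))).
    rewrite Gauss_dvdp ?coprimep_geomp_Xn_sub1 //; apply/andP; split.
      apply: (dvdp_mulXn_add_eqmod (dvdp_geomp_Xn_sub1 _ k) _
               (dvdp_trans (dvdp_mulIr _ _) dvd_ab)).
      by rewrite addnAC modnDr.
    have period : t.+1 = 0 %[mod t.+1] by rewrite modnn mod0n.
    have := dvdp_trans dvd_Xt_Xk dvd_k1.
    by rewrite ![_ + b]addrC (dvdp_add_Xn_eqmod _ _ (dvdpp _) period) expr0 mul1r.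
  rewrite size_mul -?size_poly_eq0 ?size_geomp ?size_Xn_sub_1 -?lt0n //.
  rewrite !addnS /= ltnS addnC; apply: leq_trans (size_add _ _) _.
  rewrite geq_max (leq_trans size_b (leq_addl _ _)) andbT.
  by apply: leq_trans (size_mul_leq _ _) _; rewrite size_polyXn addSn leq_add2l.
have b_eq : b = - ('X^t * a) by apply/eqP; rewrite -addr_eq0 addrC c0.
suff a0 : a = 0 by rewrite b_eq a0 mulr0 oppr0.
have [//|a_neq0] := eqVneq a 0.
have size_ta : (t + size a <= k)%N.
  by move: size_b; rewrite b_eq size_opp mulrC size_mulXn.
have dvd_a : 'X^(k.+1) - 1 %| ('X^(t.+1) - 1) * a.
  rewrite -(Gauss_dvdpr _ (@coprimep_Xn_sub1_Xn _ k.+1 t (ltn0Sn k))).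
  by have <- : 'X^(t.+1) * ('X^t * a) + b = 'X^t * (('X^(t.+1) - 1) * a) by rewrite b_eq; ring.
have /eqP : ('X^(t.+1) - 1) * a = 0.
  by apply: dvdp_size_eq0 dvd_a _; rewrite size_mul ?Xn_sub1_neq0 // !size_Xn_sub_1 //; lia.
by rewrite mulf_eq0 (negPf (Xn_sub1_neq0 _ (ltn0Sn t))) (negPf a_neq0).
Qed.

Lemma N_nat n k : (k < n)%N -> N n%:Z k = nullityA n k.
Proof. by move=> lt_kn; rewrite /N ltz_nat lt_kn. Qed.

Local Close Scope ring_scope.

Theorem theorem8p7 (t k : nat) (ht : (2 <= t)%N) (hk : (2 <= k)%N)
  (hdiv : (t.+1 %| k.+1)%N) (i : nat) (hi : (i <= t)%N) :
  N ((t * k + i)%N%:Z) k = (t - i)%N /\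
  N ((t * k)%N%:Z - i%:Z)%R k = (t - i)%N.
Proof.
have k_gt0 : 0 < k by lia.
have le_tk : t <= k by rewrite -ltnS dvdn_leq.
have le_t_tk : t <= t * k by rewrite leq_pmulr.
have lt_k_tk : k < t * k by rewrite ltn_Pmull.
have tk1 : t * k + t = t * k.+1 by rewrite mulnS addnC.
have top : nullityA (t * k + t) k = 0.
  by apply: (nullityA_eq0_modD hdiv k_gt0); rewrite ?modnMDl // tk1 modnMl.
have bottom : nullityA (t * k - t) k = 0.
  by apply: (nullityA_eq0_modB hdiv k_gt0); rewrite subnK // ?tk1 modnMl mod0n.
have middle := nullityA_tk_ge hdiv k_gt0.
have [up1 _] := nullityA_lipschitz k (leq_add (leqnn (t * k)) hi).
have [up2 _] := nullityA_lipschitz k (leq_addr i (t * k)).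
have [_ dn1] := nullityA_lipschitz k (leq_sub2l (t * k) hi).
have [_ dn2] := nullityA_lipschitz k (leq_subr i (t * k)).
split; first by rewrite N_nat; lia.
rewrite subzn; last exact: leq_trans hi le_t_tk.
have [lt_k_tki | small] := ltnP k (t * k - i); first by rewrite N_nat; lia.
(* Only t = k = i = 2 is left, and there N(2,2) is the nullity of A(8,2) by definition. *)
have tk_le : t * k <= k + t by lia.
have [? ?] : t = 2 /\ k = 2 by nia.
subst t k; have -> : i = 2 by lia.
by apply: (@nullityA_eq0_modB 2).
Qed.
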